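(* Let $Q\in\mathcal N$ be an intrinsic vanishing point and $z$ a local holomorphic coordinate with $z(Q)=0$ and metric $h(z,\bar z)dz\,d\bar z$. Expand $-\frac{h_z}{h}=c_0+c_1\bar z+c_2z+c_3z^2+c_4\bar z^2+c_5z\bar z+O(|z|^3)$, let $\gamma_1=-c_0/2$, and set $\nu_2=c_5-2\gamma_1c_1$, $\nu_3=c_4-c_1\bar\gamma_1$. Then $\nu_2=\nu_3=0$. Consequently the normal-form coordinate $w=z+\gamma_1z^2+\gamma_2z^3+\gamma_3z^4$ (with $\gamma_2,\gamma_3$ determined by $c_2+2\gamma_1c_0+6\gamma_2=0$, $12\gamma_3+c_3+2\gamma_1c_2+3\gamma_2c_0=0$) of a solution of the Schrödinger map flow satisfies $i\partial_tw+\partial_x^2w=c_1\bar w(\partial_xw)^2+O(|w|^3)(\partial_xw)^2$.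
   Context: $Q$ is an intrinsic vanishing point if $[\ln h]_z(0)[\ln h]_{z\bar z}(0)-[\ln h]_{z\bar zz}(0)=0$ (Wirtinger derivatives). In the coordinate $z$ the 1D Schrödinger map flow reads $i\partial_tz+\partial_x^2z=-\frac{h_z}{h}(\partial_xz)^2$ (convention $J=$ multiplication by $i$; the paper writes the right side with the opposite sign). *)

From Stdlib Require Import Reals.
From Coquelicot Require Import Coquelicot.
Open Scope R_scope.

Notation CC := Complex.C.

Definition fun2 := R -> R -> CC.

Definition pd1 (g : fun2) : fun2 := fun a b =>
  (Derive (fun t => Re (g t b)) a, Derive (fun t => Im (g t b)) a).
Definition pd2 (g : fun2) : fun2 := fun a b =>
  (Derive (fun t => Re (g a t)) b, Derive (fun t => Im (g a t)) b).

(* Wirtinger derivatives, with z = x + i y identified with (x, y). *)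
Definition dz (g : fun2) : fun2 := fun x y =>
  (/2 * (pd1 g x y - Ci * pd2 g x y))%C.
Definition dzb (g : fun2) : fun2 := fun x y =>
  (/2 * (pd1 g x y + Ci * pd2 g x y))%C.

Definition inball (a0 b0 r : R) (a b : R) : Prop :=
  (a - a0) ^ 2 + (b - b0) ^ 2 < r ^ 2.

Fixpoint Ck (k : nat) (g : fun2) (U : R -> R -> Prop) : Prop :=
  match k with
  | O => forall a b, U a b ->
      continuous (fun p : R * R => g (fst p) (snd p)) (a, b)
  | S k' =>
      (forall a b, U a b ->
         continuous (fun p : R * R => g (fst p) (snd p)) (a, b) /\
         ex_derive (fun t => Re (g t b)) a /\ ex_derive (fun t => Im (g t b)) a /\
         ex_derive (fun t => Re (g a t)) b /\ ex_derive (fun t => Im (g a t)) b)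
      /\ Ck k' (pd1 g) U /\ Ck k' (pd2 g) U
  end.

Definition smooth_on (g : fun2) (U : R -> R -> Prop) : Prop := forall k, Ck k g U.

Definition cplx (h : R -> R -> R) : fun2 := fun x y => RtoC (h x y).

Definition lnh (h : R -> R -> R) : fun2 := fun x y => RtoC (ln (h x y)).

Definition intrinsic_vanishing (h : R -> R -> R) : Prop :=
  (dz (lnh h) 0 0 * dzb (dz (lnh h)) 0 0 - dz (dzb (dz (lnh h))) 0 0)%C = 0%C.

Definition mhz (h : R -> R -> R) (zeta : CC) : CC :=
  (- (dz (cplx h) (Re zeta) (Im zeta) / cplx h (Re zeta) (Im zeta)))%C.

(* The 1D Schroedinger map flow in the coordinate z (J = multiplication by i):
   i d_t Z + d_x^2 Z = - (h_z/h)(Z) (d_x Z)^2, Z = Z(t, x). *)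
Definition SMF_at (h : R -> R -> R) (Z : fun2) (t x : R) : Prop :=
  (Ci * pd1 Z t x + pd2 (pd2 Z) t x = mhz h (Z t x) * (pd2 Z t x * pd2 Z t x))%C.

(* Write G = [ln h]_z, so that -h_z/h = -G = c0 + c1 zbar + ... + O(|z|^3).  The Wirtinger
   derivatives of G at 0 are read off this expansion through the real Taylor formula:
   G = -c0, G_zbar = -c1, G_{zbar z} = -c5 and G_{zbar zbar} = -2 c4.  Now G_zbar = [ln h]_{z zbar}
   is a quarter of the Laplacian of the real function ln h, hence real: c1 is real and
   G_{zbar zbar} = conj G_{zbar z}, i.e. 2 c4 = conj c5.  The vanishing condition reads
   c0 c1 + c5 = 0, and these relations give nu2 = nu3 = 0.
   For the flow, W = w(Z) satisfies i W_t + W_xx = (w' m + w'') / w'^2 (W_x)^2 with m = -h_z/h.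
   With the gammas as chosen and nu2 = nu3 = 0, every term of degree at most 2 in (z, zbar) of
   w' m + w'' - c1 conj(w) w'^2 cancels, and |z| <= 2 |w| near 0 turns the remaining O(|z|^3)
   into O(|w|^3). *)

From Stdlib Require Import Reals Lra Lia.
From Coquelicot Require Import Coquelicot.
Open Scope R_scope.

Definition bigO (n : nat) (f : CC -> CC) : Prop :=
  exists K d, 0 < d /\ forall z, Cmod z < d -> Cmod (f z) <= K * Cmod z ^ n.

Lemma Rlt_Rmin_inv x a b : x < Rmin a b -> x < a /\ x < b.
Proof. intros H; split; eapply Rlt_le_trans; eauto using Rmin_l, Rmin_r. Qed.

Lemma bigO_ext_near n f g :
  (exists d, 0 < d /\ forall z, Cmod z < d -> f z = g z) -> bigO n f -> bigO n g.
Proof.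
  intros [d1 [Hd1 Hfg]] [K [d [Hd Hf]]].
  exists K, (Rmin d d1); split; [now apply Rmin_pos|].
  intros z [Hz Hz1]%Rlt_Rmin_inv. rewrite <- Hfg by exact Hz1. now apply Hf.
Qed.

Lemma bigO_plus n f g : bigO n f -> bigO n g -> bigO n (fun z => f z + g z)%C.
Proof.
  intros [K1 [d1 [Hd1 Hf]]] [K2 [d2 [Hd2 Hg]]].
  exists (K1 + K2), (Rmin d1 d2); split; [now apply Rmin_pos|].
  intros z [Hz1 Hz2]%Rlt_Rmin_inv.
  eapply Rle_trans; [apply Cmod_triangle|].
  specialize (Hf z Hz1); specialize (Hg z Hz2); lra.
Qed.

Lemma bigO_opp n f : bigO n f -> bigO n (fun z => - f z)%C.
Proof.
  intros [K [d [Hd Hf]]]. exists K, d; split; [exact Hd|].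
  intros z Hz; rewrite Cmod_opp; now apply Hf.
Qed.

Lemma bigO_mult m n f g : bigO m f -> bigO n g -> bigO (m + n) (fun z => f z * g z)%C.
Proof.
  intros [K1 [d1 [Hd1 Hf]]] [K2 [d2 [Hd2 Hg]]].
  exists (K1 * K2), (Rmin d1 d2); split; [now apply Rmin_pos|].
  intros z [Hz1 Hz2]%Rlt_Rmin_inv. rewrite Cmod_mult, pow_add.
  replace (K1 * K2 * (Cmod z ^ m * Cmod z ^ n)) with ((K1 * Cmod z ^ m) * (K2 * Cmod z ^ n)) by ring.
  apply Rmult_le_compat; auto using Cmod_ge_0.
Qed.

Lemma bigO_const c : bigO 0 (fun _ => c).
Proof. exists (Cmod c), 1; split; [lra|]. intros z _; simpl; lra. Qed.

Lemma bigO_id : bigO 1 (fun z => z).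
Proof. exists 1, 1; split; [lra|]. intros z _; simpl; lra. Qed.

Lemma bigO_conj : bigO 1 Cconj.
Proof. exists 1, 1; split; [lra|]. intros z _; rewrite Cmod_conj; simpl; lra. Qed.

Lemma bigO_le m n f : (m <= n)%nat -> bigO n f -> bigO m f.
Proof.
  intros Hmn [K [d [Hd Hf]]].
  exists (Rabs K), (Rmin d 1); split; [apply Rmin_pos; lra|].
  intros z [Hz Hz1]%Rlt_Rmin_inv.
  pose proof (Cmod_ge_0 z).
  eapply Rle_trans; [apply Hf, Hz|].
  apply Rle_trans with (Rabs K * Cmod z ^ n).
  - apply Rmult_le_compat_r; [apply pow_le; lra | apply Rle_abs].
  - apply Rmult_le_compat_l; [apply Rabs_pos|].
    replace n with (m + (n - m))%nat by lia. rewrite pow_add.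
    rewrite <- (Rmult_1_r (Cmod z ^ m)) at 2.
    apply Rmult_le_compat_l; [apply pow_le; lra|].
    rewrite <- (pow1 (n - m)); apply pow_incr; lra.
Qed.

Lemma bigO0_id : bigO 0 (fun z => z).
Proof. exact (bigO_le 0 1 _ (Nat.le_0_l 1) bigO_id). Qed.

Lemma bigO0_conj : bigO 0 Cconj.
Proof. exact (bigO_le 0 1 _ (Nat.le_0_l 1) bigO_conj). Qed.

Ltac bigO_bounded :=
  repeat first [ apply bigO_const | apply bigO0_id | apply bigO0_conj
               | apply bigO_opp | apply (bigO_plus 0) | apply (bigO_mult 0 0) ].

Lemma bigO1_small f : bigO 1 f -> exists d, 0 < d /\ forall z, Cmod z < d -> Cmod (f z) <= / 2.
Proof.
  intros [K [d [Hd Hf]]].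
  set (e := / (2 * (Rabs K + 1))).
  assert (He : 0 < e) by (unfold e; pose proof (Rabs_pos K); apply Rinv_0_lt_compat; lra).
  exists (Rmin d e); split; [now apply Rmin_pos|].
  intros z [Hz Hze]%Rlt_Rmin_inv.
  pose proof (Cmod_ge_0 z).
  eapply Rle_trans; [apply Hf, Hz|]. rewrite pow_1.
  apply Rle_trans with ((Rabs K + 1) * e).
  - pose proof (Rle_abs K). pose proof (Rabs_pos K). nra.
  - unfold e. right. field. pose proof (Rabs_pos K). lra.
Qed.

Lemma Cmod_one_plus_small g :
  bigO 1 g -> exists d, 0 < d /\ forall z, Cmod z < d -> / 2 <= Cmod (1 + g z)%C.
Proof.
  intros [d [Hd Hg]]%bigO1_small. exists d; split; [exact Hd|].
  intros z Hz. specialize (Hg z Hz).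
  pose proof (Cmod_triangle (1 + g z)%C (- g z)%C) as Htri.
  replace (1 + g z + - g z)%C with (RtoC 1) in Htri by ring.
  rewrite Cmod_opp, Cmod_R, Rabs_R1 in Htri. lra.
Qed.

Lemma bigO_inv_one_plus g : bigO 1 g -> bigO 0 (fun z => / (1 + g z))%C.
Proof.
  intros [d [Hd Hg]]%Cmod_one_plus_small. exists 2, d; split; [exact Hd|].
  intros z Hz. specialize (Hg z Hz). simpl.
  assert (Hnz : (1 + g z)%C <> 0%C) by (intros E; rewrite E, Cmod_0 in Hg; lra).
  rewrite Cmod_inv by exact Hnz. rewrite Rmult_1_r, <- (Rinv_inv 2).
  apply Rinv_le_contravar; lra.
Qed.

Lemma Cmod_le_twice_near_id g :
  bigO 1 g -> exists d, 0 < d /\ forall z, Cmod z < d -> Cmod z <= 2 * Cmod (z + z * g z)%C.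
Proof.
  intros [d [Hd Hg]]%bigO1_small. exists d; split; [exact Hd|].
  intros z Hz. specialize (Hg z Hz).
  pose proof (Cmod_triangle (z + z * g z)%C (- (z * g z))%C) as Htri.
  replace (z + z * g z + - (z * g z))%C with z in Htri by ring.
  rewrite Cmod_opp, Cmod_mult in Htri.
  pose proof (Cmod_ge_0 z). nra.
Qed.

Definition quad_form (a0 a1 a2 a3 a4 a5 z : CC) : CC :=
  (a0 + a1 * Cconj z + a2 * z + a3 * (z * z) + a4 * (Cconj z * Cconj z) + a5 * (z * Cconj z))%C.

Section NormalForm.

Variables c0 c1 c2 c3 c4 c5 g1 g2 g3 : CC.

Definition wmap (z : CC) : CC :=
  (z + g1 * (z * z) + g2 * (z * z * z) + g3 * (z * z * z * z))%C.
Definition dwmap (z : CC) : CC :=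
  (1 + 2 * g1 * z + 3 * g2 * (z * z) + 4 * g3 * (z * z * z))%C.
Definition d2wmap (z : CC) : CC := (2 * g1 + 6 * g2 * z + 12 * g3 * (z * z))%C.

Definition nf_residual (z : CC) : CC :=
  (dwmap z * quad_form c0 c1 c2 c3 c4 c5 z + d2wmap z
   - c1 * Cconj (wmap z) * (dwmap z * dwmap z))%C.

Hypothesis Hg1 : g1 = (- c0 / 2)%C.
Hypothesis Hg2 : (c2 + 2 * g1 * c0 + 6 * g2)%C = 0%C.
Hypothesis Hg3 : (12 * g3 + c3 + 2 * g1 * c2 + 3 * g2 * c0)%C = 0%C.
Hypothesis Hnu2 : (c5 - 2 * g1 * c1)%C = 0%C.
Hypothesis Hnu3 : (c4 - c1 * Cconj g1)%C = 0%C.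

Lemma nf_residual_bigO3 : bigO 3 nf_residual.
Proof.
  assert (E0 : c0 = (-2 * g1)%C) by (rewrite Hg1; field).
  assert (E2 : c2 = (- 2 * g1 * c0 - 6 * g2)%C).
  { transitivity (c2 + 2 * g1 * c0 + 6 * g2 - 2 * g1 * c0 - 6 * g2)%C; [ring|].
    rewrite Hg2; ring. }
  assert (E3 : c3 = (- 12 * g3 - 2 * g1 * c2 - 3 * g2 * c0)%C).
  { transitivity (12 * g3 + c3 + 2 * g1 * c2 + 3 * g2 * c0 - 12 * g3 - 2 * g1 * c2 - 3 * g2 * c0)%C;
      [ring|].
    rewrite Hg3; ring. }
  assert (E4 : c4 = (c1 * Cconj g1)%C).
  { transitivity (c4 - c1 * Cconj g1 + c1 * Cconj g1)%C; [ring|]. rewrite Hnu3; ring. }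
  assert (E5 : c5 = (2 * g1 * c1)%C).
  { transitivity (c5 - 2 * g1 * c1 + 2 * g1 * c1)%C; [ring|]. rewrite Hnu2; ring. }
  set (q := fun z => (2 * g1 + 3 * g2 * z + 4 * g3 * (z * z))%C).
  set (cq := fun z => (Cconj g1 + Cconj g2 * z + Cconj g3 * (z * z))%C).
  assert (Hcubic : forall z, nf_residual z =
    (z * z * z * (2 * g1 * c3 + 3 * g2 * (c2 + c3 * z + c5 * Cconj z)
                  + 4 * g3 * quad_form c0 c1 c2 c3 c4 c5 z)
     + z * z * Cconj z * (2 * g1 * c5 + 3 * g2 * (c1 + c4 * Cconj z)
                          - c1 * (6 * g2 + 8 * g3 * z + q z * q z))
     + z * Cconj z * Cconj z * (2 * g1 * c4 - c1 * cq (Cconj z) * (2 * q z + z * q z * q z))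
     + Cconj z * Cconj z * Cconj z * (- c1 * (Cconj g2 + Cconj g3 * Cconj z)))%C).
  { intros z. unfold nf_residual, wmap, dwmap, d2wmap, quad_form, q, cq.
    rewrite !Cplus_conj, !Cmult_conj. rewrite E3, E2, E5, E4, E0. ring. }
  eapply bigO_ext_near.
  { exists 1; split; [lra|]. intros z _. symmetry. apply Hcubic. }
  repeat apply bigO_plus; apply (bigO_mult 3 0);
    try (apply (bigO_mult 2 1); [apply (bigO_mult 1 1)|]);
    try first [apply bigO_id | apply bigO_conj];
    unfold quad_form, q, cq, Cminus; bigO_bounded.
Qed.

Variable m : CC -> CC.
Hypothesis Hm : bigO 3 (fun z => m z - quad_form c0 c1 c2 c3 c4 c5 z)%C.

Definition nf_error (z : CC) : CC :=
  ((dwmap z * m z + d2wmap z) / (dwmap z * dwmap z) - c1 * Cconj (wmap z))%C.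

Lemma dwmap_near_one : bigO 1 (fun z => dwmap z - 1)%C.
Proof.
  eapply bigO_ext_near.
  { exists 1; split; [lra|]. intros z _.
    instantiate (1 := fun z => (z * (2 * g1 + 3 * g2 * z + 4 * g3 * (z * z)))%C).
    unfold dwmap; simpl; ring. }
  apply (bigO_mult 1 0); [apply bigO_id | bigO_bounded].
Qed.

Lemma dwmap_nonzero_near : exists d, 0 < d /\ forall z, Cmod z < d -> dwmap z <> 0%C.
Proof.
  destruct (Cmod_one_plus_small _ dwmap_near_one) as [d [Hd Hlow]].
  exists d; split; [exact Hd|]. intros z Hz E.
  specialize (Hlow z Hz). replace (1 + (dwmap z - 1))%C with (dwmap z) in Hlow by ring.
  rewrite E, Cmod_0 in Hlow. lra.
Qed.

Lemma nf_error_bigO3 : bigO 3 nf_error.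
Proof.
  assert (Hinv : bigO 0 (fun z => / dwmap z)%C).
  { eapply bigO_ext_near; [| exact (bigO_inv_one_plus _ dwmap_near_one)].
    exists 1; split; [lra|]. intros z _. f_equal. ring. }
  eapply bigO_ext_near.
  { destruct dwmap_nonzero_near as [d [Hd Hnz]].
    exists d; split; [exact Hd|]. intros z Hz.
    instantiate (1 := fun z => (nf_residual z * (/ dwmap z * / dwmap z)
                                + (m z - quad_form c0 c1 c2 c3 c4 c5 z) * / dwmap z)%C).
    unfold nf_error, nf_residual. simpl. field. exact (Hnz z Hz). }
  apply bigO_plus.
  - apply (bigO_mult 3 0); [exact nf_residual_bigO3 | exact (bigO_mult 0 0 _ _ Hinv Hinv)].
  - exact (bigO_mult 3 0 _ _ Hm Hinv).
Qed.

Lemma nf_error_bound : exists d K, 0 < d /\ forall z, Cmod z < d ->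
  dwmap z <> 0%C /\ Cmod (nf_error z) <= K * Cmod (wmap z) ^ 3.
Proof.
  destruct dwmap_nonzero_near as [d1 [Hd1 Hnz]].
  destruct nf_error_bigO3 as [K [d2 [Hd2 HE]]].
  destruct (Cmod_le_twice_near_id (fun z => z * (g1 + g2 * z + g3 * (z * z)))%C) as [d3 [Hd3 Hw]].
  { apply (bigO_mult 1 0); [apply bigO_id | bigO_bounded]. }
  exists (Rmin d1 (Rmin d2 d3)), (8 * Rabs K); split; [repeat apply Rmin_pos; assumption|].
  intros z [Hz1 [Hz2 Hz3]%Rlt_Rmin_inv]%Rlt_Rmin_inv.
  split; [exact (Hnz z Hz1)|].
  specialize (Hw z Hz3). replace (z + z * (z * (g1 + g2 * z + g3 * (z * z))))%C with (wmap z) in Hw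
    by (unfold wmap; ring).
  pose proof (Cmod_ge_0 z).
  assert (Hz3w : Cmod z ^ 3 <= 8 * Cmod (wmap z) ^ 3).
  { replace (8 * Cmod (wmap z) ^ 3) with ((2 * Cmod (wmap z)) ^ 3) by ring.
    apply pow_incr; lra. }
  eapply Rle_trans; [apply HE, Hz2|].
  apply Rle_trans with (Rabs K * Cmod z ^ 3).
  - apply Rmult_le_compat_r; [apply pow_le; lra | apply Rle_abs].
  - replace (8 * Rabs K * Cmod (wmap z) ^ 3) with (Rabs K * (8 * Cmod (wmap z) ^ 3)) by ring.
    apply Rmult_le_compat_l; [apply Rabs_pos | exact Hz3w].
Qed.

End NormalForm.

Definition is_derive_C (f : R -> CC) (t : R) (l : CC) : Prop :=
  is_derive (fun s => Re (f s)) t (Re l) /\ is_derive (fun s => Im (f s)) t (Im l).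

Definition Derive_C (f : R -> CC) (t : R) : CC :=
  (Derive (fun s => Re (f s)) t, Derive (fun s => Im (f s)) t).

Lemma is_derive_C_unique f t l : is_derive_C f t l -> Derive_C f t = l.
Proof.
  intros [Hre Him]. apply injective_projections; apply is_derive_unique; assumption.
Qed.

Lemma Derive_C_correct f t :
  ex_derive (fun s => Re (f s)) t -> ex_derive (fun s => Im (f s)) t ->
  is_derive_C f t (Derive_C f t).
Proof. intros; split; apply Derive_correct; assumption. Qed.

Lemma is_derive_C_const (c : CC) t : is_derive_C (fun _ => c) t 0%C.
Proof. split; exact (is_derive_const (K := R_AbsRing) _ t). Qed.

Lemma is_derive_C_plus f g t a b :
  is_derive_C f t a -> is_derive_C g t b -> is_derive_C (fun s => f s + g s)%C t (a + b)%C.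
Proof.
  intros [Hf1 Hf2] [Hg1 Hg2]; split.
  - exact (is_derive_plus (fun s => Re (f s)) (fun s => Re (g s)) _ _ _ Hf1 Hg1).
  - exact (is_derive_plus (fun s => Im (f s)) (fun s => Im (g s)) _ _ _ Hf2 Hg2).
Qed.

Lemma is_derive_C_mult f g t a b :
  is_derive_C f t a -> is_derive_C g t b ->
  is_derive_C (fun s => f s * g s)%C t (a * g t + f t * b)%C.
Proof.
  intros [Hf1 Hf2] [Hg1 Hg2].
  assert (Hm : forall (u v : R -> R) du dv, is_derive u t du -> is_derive v t dv ->
            is_derive (fun s => u s * v s) t (du * v t + u t * dv)).
  { intros u v du dv Hu Hv.
    apply (is_derive_mult u v); [exact Hu | exact Hv | intros; apply Rmult_comm]. }
  split.
  - apply (is_derive_ext (fun s => Re (f s) * Re (g s) - Im (f s) * Im (g s))); [reflexivity|].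
    replace (Re (a * g t + f t * b)%C)
      with ((Re a * Re (g t) + Re (f t) * Re b) - (Im a * Im (g t) + Im (f t) * Im b))
      by (unfold Re, Im; simpl; ring).
    apply (is_derive_minus (fun s => Re (f s) * Re (g s)) (fun s => Im (f s) * Im (g s)));
      apply Hm; assumption.
  - apply (is_derive_ext (fun s => Re (f s) * Im (g s) + Im (f s) * Re (g s))); [reflexivity|].
    replace (Im (a * g t + f t * b)%C)
      with ((Re a * Im (g t) + Re (f t) * Im b) + (Im a * Re (g t) + Im (f t) * Re b))
      by (unfold Re, Im; simpl; ring).
    apply (is_derive_plus (fun s => Re (f s) * Im (g s)) (fun s => Im (f s) * Re (g s)));
      apply Hm; assumption.
Qed.

Lemma is_derive_C_ext f t l l' : is_derive_C f t l -> l = l' -> is_derive_C f t l'.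
Proof. now intros H <-. Qed.

Lemma is_derive_C_ext_loc f g t l :
  locally t (fun s => f s = g s) -> is_derive_C g t l -> is_derive_C f t l.
Proof.
  intros Hfg [Hre Him]; split; eapply is_derive_ext_loc; try eassumption;
    eapply filter_imp; try exact Hfg; intros s ->; reflexivity.
Qed.

Ltac is_derive_C_poly Hf :=
  repeat match goal with
  | |- is_derive_C (fun s => Cplus (@?u s) (@?v s)) _ _ => apply (is_derive_C_plus u v)
  | |- is_derive_C (fun s => Cmult (@?u s) (@?v s)) _ _ => apply (is_derive_C_mult u v)
  | |- is_derive_C _ _ _ => first [exact Hf | apply is_derive_C_const]
  end.

Lemma is_derive_C_wmap g1 g2 g3 f t d : is_derive_C f t d ->
  is_derive_C (fun s => wmap g1 g2 g3 (f s)) t (dwmap g1 g2 g3 (f t) * d)%C.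
Proof.
  intros Hf. eapply is_derive_C_ext; unfold wmap; [is_derive_C_poly Hf|]. unfold dwmap; ring.
Qed.

Lemma is_derive_C_dwmap g1 g2 g3 f t d : is_derive_C f t d ->
  is_derive_C (fun s => dwmap g1 g2 g3 (f s)) t (d2wmap g1 g2 g3 (f t) * d)%C.
Proof.
  intros Hf. eapply is_derive_C_ext; unfold dwmap; [is_derive_C_poly Hf|]. unfold d2wmap; ring.
Qed.

Section Chain.

Variables g1 g2 g3 : CC.

Lemma Derive_C_wmap f t :
  ex_derive (fun s => Re (f s)) t -> ex_derive (fun s => Im (f s)) t ->
  Derive_C (fun s => wmap g1 g2 g3 (f s)) t = (dwmap g1 g2 g3 (f t) * Derive_C f t)%C.
Proof.
  intros Hre Him. apply is_derive_C_unique, is_derive_C_wmap, Derive_C_correct; assumption.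
Qed.

Lemma Derive_C_wmap_2 f t :
  locally t (fun s => ex_derive (fun r => Re (f r)) s /\ ex_derive (fun r => Im (f r)) s) ->
  ex_derive (fun s => Re (Derive_C f s)) t -> ex_derive (fun s => Im (Derive_C f s)) t ->
  Derive_C (Derive_C (fun s => wmap g1 g2 g3 (f s))) t =
  (d2wmap g1 g2 g3 (f t) * Derive_C f t * Derive_C f t
   + dwmap g1 g2 g3 (f t) * Derive_C (Derive_C f) t)%C.
Proof.
  intros Hloc Hre Him.
  assert (Hext : locally t (fun s =>
    Derive_C (fun r => wmap g1 g2 g3 (f r)) s = (dwmap g1 g2 g3 (f s) * Derive_C f s)%C)).
  { eapply filter_imp; [| exact Hloc]. intros s [H1 H2]. now apply Derive_C_wmap. }
  apply is_derive_C_unique, (is_derive_C_ext_loc _ _ _ _ Hext).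
  eapply is_derive_C_ext.
  - destruct (locally_singleton _ _ Hloc).
    apply is_derive_C_mult; [apply is_derive_C_dwmap |]; apply Derive_C_correct; assumption.
  - cbv beta. ring.
Qed.

End Chain.

Lemma locally_inball_slice t0 x0 rho : 0 < rho -> locally x0 (fun x => inball t0 x0 rho t0 x).
Proof.
  intros Hrho. exists (mkposreal rho Hrho). intros x Hx.
  change (Rabs (x - x0) < rho) in Hx. apply Rabs_def2 in Hx. unfold inball. nra.
Qed.

Lemma smf_normal_form (m : CC -> CC) c1 g1 g2 g3 (Z : fun2) t0 x0 rho :
  0 < rho -> smooth_on Z (inball t0 x0 rho) ->
  (Ci * pd1 Z t0 x0 + pd2 (pd2 Z) t0 x0 = m (Z t0 x0) * (pd2 Z t0 x0 * pd2 Z t0 x0))%C ->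
  dwmap g1 g2 g3 (Z t0 x0) <> 0%C ->
  let W := fun t x => wmap g1 g2 g3 (Z t x) in
  (Ci * pd1 W t0 x0 + pd2 (pd2 W) t0 x0 =
   c1 * Cconj (W t0 x0) * (pd2 W t0 x0 * pd2 W t0 x0)
   + nf_error c1 g1 g2 g3 m (Z t0 x0) * (pd2 W t0 x0 * pd2 W t0 x0))%C.
Proof.
  intros Hrho Hs Hsmf Hnz W.
  destruct (Hs 2%nat) as [HZ [_ [HZx _]]].
  assert (Hin : inball t0 x0 rho t0 x0) by (unfold inball; nra).
  destruct (HZ t0 x0 Hin) as [_ [Ht1 [Ht2 [Hx1 Hx2]]]].
  destruct (HZx t0 x0 Hin) as [_ [_ [_ [Hxx1 Hxx2]]]].
  assert (Et : pd1 W t0 x0 = (dwmap g1 g2 g3 (Z t0 x0) * pd1 Z t0 x0)%C)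
    by exact (Derive_C_wmap g1 g2 g3 (fun t => Z t x0) t0 Ht1 Ht2).
  assert (Ex : pd2 W t0 x0 = (dwmap g1 g2 g3 (Z t0 x0) * pd2 Z t0 x0)%C)
    by exact (Derive_C_wmap g1 g2 g3 (fun x => Z t0 x) x0 Hx1 Hx2).
  assert (Exx : pd2 (pd2 W) t0 x0 = (d2wmap g1 g2 g3 (Z t0 x0) * pd2 Z t0 x0 * pd2 Z t0 x0
                                     + dwmap g1 g2 g3 (Z t0 x0) * pd2 (pd2 Z) t0 x0)%C).
  { apply (Derive_C_wmap_2 g1 g2 g3 (fun x => Z t0 x) x0); [| exact Hxx1 | exact Hxx2].
    eapply filter_imp; [| exact (locally_inball_slice t0 x0 rho Hrho)].
    intros x Hx. destruct (HZ t0 x Hx) as [_ [_ [_ [H1 H2]]]]. now split. }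
  rewrite Et, Ex, Exx. unfold W, nf_error.
  transitivity (dwmap g1 g2 g3 (Z t0 x0) * (Ci * pd1 Z t0 x0 + pd2 (pd2 Z) t0 x0)
                + d2wmap g1 g2 g3 (Z t0 x0) * pd2 Z t0 x0 * pd2 Z t0 x0)%C; [ring|].
  rewrite Hsmf. field. exact Hnz.
Qed.

Definition open_2d (U : R -> R -> Prop) : Prop := forall x y, U x y -> locally_2d U x y.

Definition diff_on (n : nat) (f : R -> R -> R) (U : R -> R -> Prop) : Prop :=
  forall x y, U x y -> ex_diff_n f n x y.

Lemma is_derive_ln_comp (k : R -> R) t : ex_derive k t -> 0 < k t ->
  is_derive (fun s => ln (k s)) t (Derive k t * / k t).
Proof.
  intros Hk Hkt. apply (is_derive_comp ln k); [now apply is_derive_ln | now apply Derive_correct].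
Qed.

Section DiffOn.

Variable U : R -> R -> Prop.
Hypothesis HU : open_2d U.

Lemma open_2d_locally (P : R -> R -> Prop) x y :
  U x y -> (forall a b, U a b -> P a b) -> locally_2d P x y.
Proof. intros Hxy H. destruct (HU x y Hxy) as [d Hd]. exists d. intros; apply H, Hd; auto. Qed.

Lemma diff_on_deriv1 n f : diff_on (S n) f U -> diff_on n (fun u v => Derive (fun z => f z v) u) U.
Proof. intros H x y Hxy. now apply ex_diff_n_deriv_aux1, H. Qed.

Lemma diff_on_deriv2 n f : diff_on (S n) f U -> diff_on n (fun u v => Derive (fun z => f u z) v) U.
Proof. intros H x y Hxy. now apply ex_diff_n_deriv_aux2, H. Qed.

Lemma diff_on_le m n f : (m <= n)%nat -> diff_on n f U -> diff_on m f U.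
Proof. intros Hmn H x y Hxy. eapply ex_diff_n_m; eauto. Qed.

Lemma diff_on_ex_derive1 n f x y : diff_on (S n) f U -> U x y -> ex_derive (fun z => f z y) x.
Proof. intros H Hxy. apply (H x y Hxy). Qed.

Lemma diff_on_ex_derive2 n f x y : diff_on (S n) f U -> U x y -> ex_derive (fun z => f x z) y.
Proof. intros H Hxy. apply (H x y Hxy). Qed.

Lemma diff_on_continuity n f x y : diff_on n f U -> U x y -> continuity_2d_pt f x y.
Proof. intros H Hxy. destruct n; apply (H x y Hxy). Qed.

Lemma diff_on_ext n f g : (forall x y, f x y = g x y) -> diff_on n f U -> diff_on n g U.
Proof.
  intros E H x y Hxy. apply ex_diff_n_ext_loc with f; [| now apply H].
  exists (mkposreal 1 Rlt_0_1). intros; apply E.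
Qed.

Lemma diff_on_S n f f1 f2 :
  (forall x y, U x y -> continuity_2d_pt f x y /\
     ex_derive (fun z => f z y) x /\ ex_derive (fun z => f x z) y) ->
  (forall x y, U x y -> Derive (fun z => f z y) x = f1 x y) ->
  (forall x y, U x y -> Derive (fun z => f x z) y = f2 x y) ->
  diff_on n f1 U -> diff_on n f2 U -> diff_on (S n) f U.
Proof.
  intros Hf E1 E2 H1 H2 x y Hxy.
  destruct (Hf x y Hxy) as [Hc [Hd1 Hd2]].
  repeat split; try assumption.
  - apply ex_diff_n_ext_loc with f1; [| now apply H1].
    apply (open_2d_locally (fun a b => f1 a b = _)); [exact Hxy|]. intros a b Hab. now rewrite E1.
  - apply ex_diff_n_ext_loc with f2; [| now apply H2].
    apply (open_2d_locally (fun a b => f2 a b = _)); [exact Hxy|]. intros a b Hab. now rewrite E2.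
Qed.

Lemma diff_on_const n c : diff_on n (fun _ _ => c) U.
Proof.
  revert c; induction n; intros c.
  - intros x y _. split; [apply continuity_2d_pt_const | exact I].
  - apply diff_on_S with (fun _ _ => 0) (fun _ _ => 0); try apply IHn.
    + intros x y _. repeat split; [apply continuity_2d_pt_const | apply ex_derive_const ..].
    + intros; apply Derive_const.
    + intros; apply Derive_const.
Qed.

Lemma diff_on_plus n f g : diff_on n f U -> diff_on n g U -> diff_on n (fun a b => f a b + g a b) U.
Proof.
  revert f g; induction n; intros f g Hf Hg.
  - intros x y Hxy. split; [| exact I].
    apply continuity_2d_pt_plus; eapply diff_on_continuity; eauto.
  - apply diff_on_S with (fun u v => Derive (fun z => f z v) u + Derive (fun z => g z v) u)
                         (fun u v => Derive (fun z => f u z) v + Derive (fun z => g u z) v).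
    + intros x y Hxy. repeat split.
      * apply continuity_2d_pt_plus; eapply diff_on_continuity; eauto.
      * apply (ex_derive_plus (fun z => f z y) (fun z => g z y)); eapply diff_on_ex_derive1; eauto.
      * apply (ex_derive_plus (fun z => f x z) (fun z => g x z)); eapply diff_on_ex_derive2; eauto.
    + intros x y Hxy. apply (Derive_plus (fun z => f z y) (fun z => g z y));
        eapply diff_on_ex_derive1; eauto.
    + intros x y Hxy. apply (Derive_plus (fun z => f x z) (fun z => g x z));
        eapply diff_on_ex_derive2; eauto.
    + apply IHn; apply diff_on_deriv1; assumption.
    + apply IHn; apply diff_on_deriv2; assumption.
Qed.

Lemma diff_on_mult n f g : diff_on n f U -> diff_on n g U -> diff_on n (fun a b => f a b * g a b) U.
Proof.
  revert f g; induction n; intros f g Hf Hg.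
  - intros x y Hxy. split; [| exact I].
    apply continuity_2d_pt_mult; eapply diff_on_continuity; eauto.
  - assert (Hf' : diff_on n f U) by (apply (diff_on_le n (S n)); auto).
    assert (Hg' : diff_on n g U) by (apply (diff_on_le n (S n)); auto).
    apply diff_on_S with
      (fun u v => Derive (fun z => f z v) u * g u v + f u v * Derive (fun z => g z v) u)
      (fun u v => Derive (fun z => f u z) v * g u v + f u v * Derive (fun z => g u z) v).
    + intros x y Hxy. repeat split.
      * apply continuity_2d_pt_mult; eapply diff_on_continuity; eauto.
      * apply (ex_derive_mult (fun z => f z y) (fun z => g z y)); eapply diff_on_ex_derive1; eauto.
      * apply (ex_derive_mult (fun z => f x z) (fun z => g x z)); eapply diff_on_ex_derive2; eauto.
    + intros x y Hxy. apply (Derive_mult (fun z => f z y) (fun z => g z y));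
        eapply diff_on_ex_derive1; eauto.
    + intros x y Hxy. apply (Derive_mult (fun z => f x z) (fun z => g x z));
        eapply diff_on_ex_derive2; eauto.
    + apply diff_on_plus; apply IHn; auto using diff_on_deriv1.
    + apply diff_on_plus; apply IHn; auto using diff_on_deriv2.
Qed.

Lemma diff_on_inv n g : diff_on n g U -> (forall a b, U a b -> g a b <> 0) ->
  diff_on n (fun a b => / g a b) U.
Proof.
  revert g; induction n; intros g Hg Hnz.
  - intros x y Hxy. split; [| exact I].
    apply continuity_2d_pt_inv; [eapply diff_on_continuity; eauto | auto].
  - assert (Hinv : diff_on n (fun a b => / g a b) U)
      by (apply IHn; auto; apply (diff_on_le n (S n)); auto).
    apply diff_on_S with
      (fun u v => - Derive (fun z => g z v) u * (/ g u v * / g u v))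
      (fun u v => - Derive (fun z => g u z) v * (/ g u v * / g u v)).
    + intros x y Hxy. repeat split.
      * apply continuity_2d_pt_inv; [eapply diff_on_continuity; eauto | auto].
      * apply (ex_derive_inv (fun z => g z y)); [eapply diff_on_ex_derive1; eauto | auto].
      * apply (ex_derive_inv (fun z => g x z)); [eapply diff_on_ex_derive2; eauto | auto].
    + intros x y Hxy. rewrite Derive_inv; [| eapply diff_on_ex_derive1; eauto | auto].
      field; auto.
    + intros x y Hxy. rewrite (Derive_inv (fun z => g x z)); [| eapply diff_on_ex_derive2; eauto | auto].
      field; auto.
    + apply diff_on_mult; [| apply diff_on_mult; exact Hinv].
      apply (diff_on_ext _ (fun u v => -1 * Derive (fun z => g z v) u)); [intros; ring|].
      apply diff_on_mult; [apply diff_on_const | now apply diff_on_deriv1].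
    + apply diff_on_mult; [| apply diff_on_mult; exact Hinv].
      apply (diff_on_ext _ (fun u v => -1 * Derive (fun z => g u z) v)); [intros; ring|].
      apply diff_on_mult; [apply diff_on_const | now apply diff_on_deriv2].
Qed.

Lemma diff_on_ln n g : diff_on n g U -> (forall a b, U a b -> 0 < g a b) ->
  diff_on n (fun a b => ln (g a b)) U.
Proof.
  intros Hg Hpos.
  assert (Hcont : forall x y, U x y -> continuity_2d_pt (fun a b => ln (g a b)) x y).
  { intros x y Hxy. apply continuity_1d_2d_pt_comp; [| eapply diff_on_continuity; eauto].
    apply continuity_pt_filterlim, (ex_derive_continuous ln).
    exists (/ g x y). apply is_derive_ln, Hpos, Hxy. }
  destruct n as [|n]; [intros x y Hxy; split; [now apply Hcont | exact I]|].
  apply diff_on_S with (fun u v => Derive (fun z => g z v) u * / g u v)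
                       (fun u v => Derive (fun z => g u z) v * / g u v).
  - intros x y Hxy. repeat split; [now apply Hcont | ..].
    + eexists. apply (is_derive_ln_comp (fun z => g z y));
        [eapply diff_on_ex_derive1 | apply Hpos]; eauto.
    + eexists. apply (is_derive_ln_comp (fun z => g x z));
        [eapply diff_on_ex_derive2 | apply Hpos]; eauto.
  - intros x y Hxy. apply is_derive_unique, (is_derive_ln_comp (fun z => g z y));
      [eapply diff_on_ex_derive1 | apply Hpos]; eauto.
  - intros x y Hxy. apply is_derive_unique, (is_derive_ln_comp (fun z => g x z));
      [eapply diff_on_ex_derive2 | apply Hpos]; eauto.
  - apply diff_on_mult; [now apply diff_on_deriv1 |].
    apply diff_on_inv; [apply (diff_on_le n (S n)); auto | intros a b Hab; apply Rgt_not_eq, Hpos, Hab].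
  - apply diff_on_mult; [now apply diff_on_deriv2 |].
    apply diff_on_inv; [apply (diff_on_le n (S n)); auto | intros a b Hab; apply Rgt_not_eq, Hpos, Hab].
Qed.

End DiffOn.

Lemma Rabs_le_linear_zero a K d : 0 < d -> (forall s, 0 < s < d -> Rabs a <= K * s) -> a = 0.
Proof.
  intros Hd H. destruct (Req_dec a 0) as [|Ha]; auto. exfalso.
  assert (Hpa : 0 < Rabs a) by (apply Rabs_pos_lt; auto).
  set (s := Rmin (d / 2) (Rabs a / (2 * (Rabs K + 1)))).
  assert (HK : 0 < Rabs K + 1) by (pose proof (Rabs_pos K); lra).
  assert (Hs0 : 0 < s) by (unfold s; apply Rmin_pos; [lra| apply Rdiv_lt_0_compat; lra]).
  assert (Hs1 : s < d) by (unfold s; pose proof (Rmin_l (d/2) (Rabs a / (2 * (Rabs K + 1)))); lra).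
  assert (Hs2 : s <= Rabs a / (2 * (Rabs K + 1))) by apply Rmin_r.
  specialize (H s (conj Hs0 Hs1)).
  assert (K * s <= (Rabs K + 1) * s) by (apply Rmult_le_compat_r; [lra| pose proof (Rle_abs K); lra]).
  assert ((Rabs K + 1) * s <= Rabs a / 2).
  { apply Rmult_le_compat_l with (r := Rabs K + 1) in Hs2; [|lra].
    replace ((Rabs K + 1) * (Rabs a / (2 * (Rabs K + 1)))) with (Rabs a / 2) in Hs2
      by (field; lra).
    lra. }
  lra.
Qed.

Lemma quadratic_O3_zero a b c M d : 0 < d ->
  (forall s, Rabs s < d -> Rabs (a + b * s + c * s ^ 2) <= M * Rabs s ^ 3) ->
  a = 0 /\ b = 0 /\ c = 0.
Proof.
  intros Hd H.
  assert (Ha : a = 0).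
  { apply Rabs_eq_0, Rle_antisym; [| apply Rabs_pos].
    specialize (H 0). rewrite Rabs_R0 in H.
    replace (a + b * 0 + c * 0 ^ 2) with a in H by ring.
    replace (M * 0 ^ 3) with 0 in H by ring. now apply H. }
  subst a.
  assert (Hdiv : forall s, 0 < s < d -> Rabs (b + c * s) <= Rabs M * s * s).
  { intros s Hs. apply Rmult_le_reg_l with s; [lra|].
    rewrite <- (Rabs_pos_eq s) at 1 by lra. rewrite <- Rabs_mult.
    replace (s * (b + c * s)) with (0 + b * s + c * s ^ 2) by ring.
    eapply Rle_trans; [apply H; rewrite Rabs_pos_eq; lra|].
    rewrite Rabs_pos_eq by lra. replace (s * (Rabs M * s * s)) with (Rabs M * s ^ 3) by ring.
    apply Rmult_le_compat_r; [apply pow_le; lra | apply Rle_abs]. }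
  assert (Hb : b = 0).
  { apply (Rabs_le_linear_zero b (Rabs M * d + Rabs c) d Hd). intros s Hs.
    pose proof (Rabs_triang (b + c * s) (- (c * s))) as Htri.
    replace (b + c * s + - (c * s)) with b in Htri by ring.
    rewrite Rabs_Ropp, Rabs_mult, (Rabs_pos_eq s) in Htri by lra.
    assert (Rabs M * s * s <= Rabs M * d * s)
      by (apply Rmult_le_compat_r; [lra | apply Rmult_le_compat_l; [apply Rabs_pos | lra]]).
    specialize (Hdiv s Hs). lra. }
  subst b. repeat split.
  apply (Rabs_le_linear_zero c (Rabs M) d Hd). intros s Hs.
  specialize (Hdiv s Hs). rewrite Rplus_0_l, Rabs_mult, (Rabs_pos_eq s) in Hdiv by lra.
  apply Rmult_le_reg_r with s; nra.
Qed.

Lemma quadratic2_O3_zero (A B C D E F M d : R) : 0 < d ->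
  (forall u v, Rabs u < d -> Rabs v < d ->
     Rabs (A + B * u + C * v + D * u ^ 2 + E * (u * v) + F * v ^ 2)
       <= M * Rmax (Rabs u) (Rabs v) ^ 3) ->
  A = 0 /\ B = 0 /\ C = 0 /\ D = 0 /\ E = 0 /\ F = 0.
Proof.
  intros Hd H.
  assert (Hr0 : Rabs 0 < d) by (rewrite Rabs_R0; auto).
  destruct (quadratic_O3_zero A B D M d Hd) as [HA [HB HD]].
  { intros s Hs. specialize (H s 0 Hs Hr0). rewrite Rabs_R0 in H.
    rewrite Rmax_left in H by apply Rabs_pos.
    replace (A + B * s + D * s ^ 2)
      with (A + B * s + C * 0 + D * s ^ 2 + E * (s * 0) + F * 0 ^ 2) by ring. exact H. }
  destruct (quadratic_O3_zero A C F M d Hd) as [_ [HC HF]].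
  { intros s Hs. specialize (H 0 s Hr0 Hs). rewrite Rabs_R0 in H.
    rewrite Rmax_right in H by apply Rabs_pos.
    replace (A + C * s + F * s ^ 2)
      with (A + B * 0 + C * s + D * 0 ^ 2 + E * (0 * s) + F * s ^ 2) by ring. exact H. }
  subst.
  destruct (quadratic_O3_zero 0 0 E M d Hd) as [_ [_ HE]].
  { intros s Hs. specialize (H s s Hs Hs). rewrite Rmax_left in H by lra.
    replace (0 + 0 * s + E * s ^ 2)
      with (0 + 0 * s + 0 * s + 0 * s ^ 2 + E * (s * s) + 0 * s ^ 2) by ring. exact H. }
  repeat split; auto.
Qed.

Lemma DL_pol_2 f x y dx dy : DL_pol 2 f x y dx dy =
  f x y + partial_derive 1 0 f x y * dx + partial_derive 0 1 f x y * dy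
  + / 2 * partial_derive 2 0 f x y * dx ^ 2 + partial_derive 1 1 f x y * (dx * dy)
  + / 2 * partial_derive 0 2 f x y * dy ^ 2.
Proof.
  unfold DL_pol, differential. simpl sum_f_R0. unfold Binomial.C. simpl.
  change (partial_derive 0 0 f x y) with (f x y). field.
Qed.

Lemma taylor2_coeffs_unique f A B C D E F : locally_2d (fun u v => ex_diff_n f 3 u v) 0 0 ->
 (exists M d, 0 < d /\ forall u v, Rabs u < d -> Rabs v < d ->
    Rabs (f u v - (A + B * u + C * v + D * u ^ 2 + E * (u * v) + F * v ^ 2))
      <= M * Rmax (Rabs u) (Rabs v) ^ 3) ->
 f 0 0 = A /\ partial_derive 1 0 f 0 0 = B /\ partial_derive 0 1 f 0 0 = C /\
 partial_derive 2 0 f 0 0 = 2 * D /\ partial_derive 1 1 f 0 0 = E /\ partial_derive 0 2 f 0 0 = 2 * F.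
Proof.
  intros Hl [M [d [Hd HM]]].
  destruct (Taylor_Lagrange_2d f 2 0 0 Hl) as [D' [d' HD']].
  destruct (quadratic2_O3_zero (f 0 0 - A) (partial_derive 1 0 f 0 0 - B)
     (partial_derive 0 1 f 0 0 - C) (/ 2 * partial_derive 2 0 f 0 0 - D)
     (partial_derive 1 1 f 0 0 - E) (/ 2 * partial_derive 0 2 f 0 0 - F)
     (D' + M) (Rmin d d')) as [H1 [H2 [H3 [H4 [H5 H6]]]]].
  { apply Rmin_pos; auto. apply cond_pos. }
  { intros u v [Hu1 Hu2]%Rlt_Rmin_inv [Hv1 Hv2]%Rlt_Rmin_inv.
    specialize (HM u v Hu1 Hv1).
    assert (Hu2' : Rabs (u - 0) < d') by (rewrite Rminus_0_r; auto).
    assert (Hv2' : Rabs (v - 0) < d') by (rewrite Rminus_0_r; auto).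
    specialize (HD' u v Hu2' Hv2'). rewrite !Rminus_0_r in HD'. rewrite DL_pol_2 in HD'.
    match goal with |- Rabs ?X <= _ => replace X with
      ((f u v - (A + B * u + C * v + D * u ^ 2 + E * (u * v) + F * v ^ 2)) -
       (f u v - (f 0 0 + partial_derive 1 0 f 0 0 * u + partial_derive 0 1 f 0 0 * v +
        / 2 * partial_derive 2 0 f 0 0 * u ^ 2 + partial_derive 1 1 f 0 0 * (u * v) +
        / 2 * partial_derive 0 2 f 0 0 * v ^ 2))) by ring end.
    eapply Rle_trans. apply Rabs_triang. rewrite Rabs_Ropp.
    replace (S 2) with 3%nat in HD' by reflexivity. lra. }
  repeat split; lra.
Qed.

Lemma Re_dz (F : fun2) x y :
  Re (dz F x y) = / 2 * (Derive (fun t => Re (F t y)) x + Derive (fun t => Im (F x t)) y).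
Proof. unfold dz, pd1, pd2. simpl. field. Qed.

Lemma Im_dz (F : fun2) x y :
  Im (dz F x y) = / 2 * (Derive (fun t => Im (F t y)) x - Derive (fun t => Re (F x t)) y).
Proof. unfold dz, pd1, pd2. simpl. field. Qed.

Lemma Re_dzb (F : fun2) x y :
  Re (dzb F x y) = / 2 * (Derive (fun t => Re (F t y)) x - Derive (fun t => Im (F x t)) y).
Proof. unfold dzb, pd1, pd2. simpl. field. Qed.

Lemma Im_dzb (F : fun2) x y :
  Im (dzb F x y) = / 2 * (Derive (fun t => Im (F t y)) x + Derive (fun t => Re (F x t)) y).
Proof. unfold dzb, pd1, pd2. simpl. field. Qed.

Lemma dzb_real (F : fun2) x y :
  locally_2d (fun a b => Im (F a b) = 0) x y -> dzb F x y = Cconj (dz F x y).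
Proof.
  intros [e He].
  assert (H1 : Derive (fun t => Im (F t y)) x = 0).
  { rewrite (Derive_ext_loc _ (fun _ => 0)); [apply Derive_const|].
    exists e. intros t Ht. apply He; [exact Ht | rewrite Rminus_diag, Rabs_R0; apply cond_pos]. }
  assert (H2 : Derive (fun t => Im (F x t)) y = 0).
  { rewrite (Derive_ext_loc _ (fun _ => 0)); [apply Derive_const|].
    exists e. intros t Ht. apply He; [rewrite Rminus_diag, Rabs_R0; apply cond_pos | exact Ht]. }
  apply injective_projections.
  - change (Re (dzb F x y) = Re (dz F x y)). rewrite Re_dzb, Re_dz, H2; ring.
  - change (Im (dzb F x y) = - Im (dz F x y)). rewrite Im_dzb, Im_dz, H1; ring.
Qed.

Section WirtingerSecond.

Variables (F : fun2) (U : R -> R -> Prop) (x y : R).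
Let Fr := fun a b => Re (F a b).
Let Fi := fun a b => Im (F a b).
Hypothesis HU : open_2d U.
Hypothesis HFr : diff_on 2 Fr U.
Hypothesis HFi : diff_on 2 Fi U.
Hypothesis Hxy : U x y.

Lemma mixed_partials_sym f : diff_on 2 f U ->
  Derive (fun s => Derive (fun t => f t s) x) y = partial_derive 1 1 f x y.
Proof.
  intros Hf. symmetry. apply Schwarz.
  - apply (open_2d_locally U HU); [exact Hxy|]. intros a b Hab. repeat split.
    + exact (diff_on_ex_derive1 U 1 f a b Hf Hab).
    + exact (diff_on_ex_derive2 U 1 f a b Hf Hab).
    + exact (diff_on_ex_derive1 U 0 _ a b (diff_on_deriv2 U 1 f Hf) Hab).
    + exact (diff_on_ex_derive2 U 0 _ a b (diff_on_deriv1 U 1 f Hf) Hab).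
  - exact (diff_on_continuity U 0 _ x y (diff_on_deriv1 U 0 _ (diff_on_deriv2 U 1 f Hf)) Hxy).
  - exact (diff_on_continuity U 0 _ x y (diff_on_deriv2 U 0 _ (diff_on_deriv1 U 1 f Hf)) Hxy).
Qed.

Lemma Derive_x_Re_dzb :
  Derive (fun t => Re (dzb F t y)) x = / 2 * (partial_derive 2 0 Fr x y - partial_derive 1 1 Fi x y).
Proof.
  rewrite (Derive_ext _ (fun t => / 2 * (Derive (fun s => Fr s y) t - Derive (fun s => Fi t s) y)))
    by (intros; apply Re_dzb).
  rewrite Derive_scal, Derive_minus; [reflexivity | ..].
  - exact (diff_on_ex_derive1 U 0 _ x y (diff_on_deriv1 U 1 Fr HFr) Hxy).
  - exact (diff_on_ex_derive1 U 0 _ x y (diff_on_deriv2 U 1 Fi HFi) Hxy).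
Qed.

Lemma Derive_x_Im_dzb :
  Derive (fun t => Im (dzb F t y)) x = / 2 * (partial_derive 2 0 Fi x y + partial_derive 1 1 Fr x y).
Proof.
  rewrite (Derive_ext _ (fun t => / 2 * (Derive (fun s => Fi s y) t + Derive (fun s => Fr t s) y)))
    by (intros; apply Im_dzb).
  rewrite Derive_scal, Derive_plus; [reflexivity | ..].
  - exact (diff_on_ex_derive1 U 0 _ x y (diff_on_deriv1 U 1 Fi HFi) Hxy).
  - exact (diff_on_ex_derive1 U 0 _ x y (diff_on_deriv2 U 1 Fr HFr) Hxy).
Qed.

Lemma Derive_y_Re_dzb :
  Derive (fun s => Re (dzb F x s)) y = / 2 * (partial_derive 1 1 Fr x y - partial_derive 0 2 Fi x y).
Proof.
  rewrite (Derive_ext _ (fun s => / 2 * (Derive (fun t => Fr t s) x - Derive (fun t => Fi x t) s)))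
    by (intros; apply Re_dzb).
  rewrite Derive_scal, Derive_minus, (mixed_partials_sym Fr HFr); [reflexivity | ..].
  - exact (diff_on_ex_derive2 U 0 _ x y (diff_on_deriv1 U 1 Fr HFr) Hxy).
  - exact (diff_on_ex_derive2 U 0 _ x y (diff_on_deriv2 U 1 Fi HFi) Hxy).
Qed.

Lemma Derive_y_Im_dzb :
  Derive (fun s => Im (dzb F x s)) y = / 2 * (partial_derive 1 1 Fi x y + partial_derive 0 2 Fr x y).
Proof.
  rewrite (Derive_ext _ (fun s => / 2 * (Derive (fun t => Fi t s) x + Derive (fun t => Fr x t) s)))
    by (intros; apply Im_dzb).
  rewrite Derive_scal, Derive_plus, (mixed_partials_sym Fi HFi); [reflexivity | ..].
  - exact (diff_on_ex_derive2 U 0 _ x y (diff_on_deriv1 U 1 Fi HFi) Hxy).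
  - exact (diff_on_ex_derive2 U 0 _ x y (diff_on_deriv2 U 1 Fr HFr) Hxy).
Qed.

Lemma Re_dz_dzb :
  Re (dz (dzb F) x y) = / 4 * (partial_derive 2 0 Fr x y + partial_derive 0 2 Fr x y).
Proof. rewrite Re_dz, Derive_x_Re_dzb, Derive_y_Im_dzb. field. Qed.

Lemma Im_dz_dzb :
  Im (dz (dzb F) x y) = / 4 * (partial_derive 2 0 Fi x y + partial_derive 0 2 Fi x y).
Proof. rewrite Im_dz, Derive_x_Im_dzb, Derive_y_Re_dzb. field. Qed.

Lemma Re_dzb_dzb : Re (dzb (dzb F) x y) =
  / 4 * (partial_derive 2 0 Fr x y - partial_derive 0 2 Fr x y - 2 * partial_derive 1 1 Fi x y).
Proof. rewrite Re_dzb, Derive_x_Re_dzb, Derive_y_Im_dzb. field. Qed.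

Lemma Im_dzb_dzb : Im (dzb (dzb F) x y) =
  / 4 * (partial_derive 2 0 Fi x y - partial_derive 0 2 Fi x y + 2 * partial_derive 1 1 Fr x y).
Proof. rewrite Im_dzb, Derive_x_Im_dzb, Derive_y_Re_dzb. field. Qed.

End WirtingerSecond.

Lemma Re_quad_form a0 a1 a2 a3 a4 a5 u v : Re (quad_form a0 a1 a2 a3 a4 a5 (u, v)) =
  Re a0 + (Re a1 + Re a2) * u + (Im a1 - Im a2) * v + (Re a3 + Re a4 + Re a5) * u ^ 2
  + (2 * Im a4 - 2 * Im a3) * (u * v) + (Re a5 - Re a3 - Re a4) * v ^ 2.
Proof. unfold quad_form, Re, Im. simpl. ring. Qed.

Lemma Im_quad_form a0 a1 a2 a3 a4 a5 u v : Im (quad_form a0 a1 a2 a3 a4 a5 (u, v)) =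
  Im a0 + (Im a1 + Im a2) * u + (Re a2 - Re a1) * v + (Im a3 + Im a4 + Im a5) * u ^ 2
  + (2 * Re a3 - 2 * Re a4) * (u * v) + (Im a5 - Im a3 - Im a4) * v ^ 2.
Proof. unfold quad_form, Re, Im. simpl. ring. Qed.

Lemma bigO3_Re_Im (G : CC -> CC) : bigO 3 G ->
  exists M d, 0 < d /\ forall u v, Rabs u < d -> Rabs v < d ->
    Rabs (Re (G (u, v))) <= M * Rmax (Rabs u) (Rabs v) ^ 3 /\
    Rabs (Im (G (u, v))) <= M * Rmax (Rabs u) (Rabs v) ^ 3.
Proof.
  intros [K [d [Hd HG]]].
  exists (8 * Rabs K), (d / 2); split; [lra|].
  intros u v Hu Hv.
  assert (Hsqrt2 : sqrt 2 < 2).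
  { rewrite <- (sqrt_square 2) at 2 by lra. apply sqrt_lt_1; lra. }
  assert (Hmax : Cmod (u, v) <= 2 * Rmax (Rabs u) (Rabs v)).
  { eapply Rle_trans; [apply Cmod_2Rmax|]. apply Rmult_le_compat_r; [|lra].
    eapply Rle_trans; [apply Rabs_pos | apply Rmax_l]. }
  assert (Hz : Cmod (u, v) < d) by (apply Rle_lt_trans with (1 := Hmax); apply Rmax_case; lra).
  assert (Hbound : Cmod (G (u, v)) <= 8 * Rabs K * Rmax (Rabs u) (Rabs v) ^ 3).
  { eapply Rle_trans; [apply HG, Hz|].
    pose proof (Cmod_ge_0 (u, v)).
    apply Rle_trans with (Rabs K * Cmod (u, v) ^ 3);
      [apply Rmult_le_compat_r; [apply pow_le; lra | apply Rle_abs]|].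
    replace (8 * Rabs K * Rmax (Rabs u) (Rabs v) ^ 3)
      with (Rabs K * (2 * Rmax (Rabs u) (Rabs v)) ^ 3) by ring.
    apply Rmult_le_compat_l; [apply Rabs_pos | apply pow_incr; lra]. }
  split; eapply Rle_trans; [| exact Hbound | | exact Hbound].
  - apply re_le_Cmod.
  - eapply Rle_trans; [apply Rmax_r | apply Rmax_Cmod].
Qed.

Lemma wirtinger_coeffs (F : fun2) (U : R -> R -> Prop) a0 a1 a2 a3 a4 a5 :
  open_2d U -> U 0 0 ->
  diff_on 3 (fun x y => Re (F x y)) U -> diff_on 3 (fun x y => Im (F x y)) U ->
  bigO 3 (fun z => F (Re z) (Im z) - quad_form a0 a1 a2 a3 a4 a5 z)%C ->
  F 0 0 = a0 /\ dzb F 0 0 = a1 /\ dz (dzb F) 0 0 = a5 /\ dzb (dzb F) 0 0 = (2 * a4)%C.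
Proof.
  intros HU HU0 HFr HFi HF.
  set (Fr := fun x y => Re (F x y)) in *. set (Fi := fun x y => Im (F x y)) in *.
  destruct (bigO3_Re_Im _ HF) as [M [d [Hd Hb]]].
  destruct (taylor2_coeffs_unique Fr (Re a0) (Re a1 + Re a2) (Im a1 - Im a2) (Re a3 + Re a4 + Re a5)
              (2 * Im a4 - 2 * Im a3) (Re a5 - Re a3 - Re a4)) as [R0 [R1 [R2 [R3 [R4 R5]]]]].
  { apply (open_2d_locally U HU); [exact HU0 | exact HFr]. }
  { exists M, d; split; [exact Hd|]. intros u v Hu Hv.
    rewrite <- Re_quad_form. exact (proj1 (Hb u v Hu Hv)). }
  destruct (taylor2_coeffs_unique Fi (Im a0) (Im a1 + Im a2) (Re a2 - Re a1) (Im a3 + Im a4 + Im a5)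
              (2 * Re a3 - 2 * Re a4) (Im a5 - Im a3 - Im a4)) as [I0 [I1 [I2 [I3 [I4 I5]]]]].
  { apply (open_2d_locally U HU); [exact HU0 | exact HFi]. }
  { exists M, d; split; [exact Hd|]. intros u v Hu Hv.
    rewrite <- Im_quad_form. exact (proj2 (Hb u v Hu Hv)). }
  assert (HFr2 : diff_on 2 Fr U) by exact (diff_on_le U 2 3 Fr (le_S _ _ (le_n 2)) HFr).
  assert (HFi2 : diff_on 2 Fi U) by exact (diff_on_le U 2 3 Fi (le_S _ _ (le_n 2)) HFi).
  repeat split; apply injective_projections.
  - exact R0.
  - exact I0.
  - change (Re (dzb F 0 0) = Re a1). rewrite Re_dzb.
    change (/ 2 * (partial_derive 1 0 Fr 0 0 - partial_derive 0 1 Fi 0 0) = Re a1).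
    rewrite R1, I2. field.
  - change (Im (dzb F 0 0) = Im a1). rewrite Im_dzb.
    change (/ 2 * (partial_derive 1 0 Fi 0 0 + partial_derive 0 1 Fr 0 0) = Im a1).
    rewrite I1, R2. field.
  - change (Re (dz (dzb F) 0 0) = Re a5).
    rewrite (Re_dz_dzb F U 0 0 HU HFr2 HFi2 HU0). fold Fr. rewrite R3, R5. field.
  - change (Im (dz (dzb F) 0 0) = Im a5).
    rewrite (Im_dz_dzb F U 0 0 HU HFr2 HFi2 HU0). fold Fi. rewrite I3, I5. field.
  - change (Re (dzb (dzb F) 0 0) = Re (2 * a4)%C).
    rewrite (Re_dzb_dzb F U 0 0 HU HFr2 HFi2 HU0). fold Fr Fi. rewrite R3, R5, I4.
    unfold Re, Im; simpl; field.
  - change (Im (dzb (dzb F) 0 0) = Im (2 * a4)%C).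
    rewrite (Im_dzb_dzb F U 0 0 HU HFr2 HFi2 HU0). fold Fr Fi. rewrite I3, I5, R4.
    unfold Re, Im; simpl; field.
Qed.

Lemma Ck_Re_diff_on n (g : fun2) U : Ck n g U -> diff_on n (fun x y => Re (g x y)) U.
Proof.
  assert (Hcont : forall (g : fun2) a b, continuous (fun p : R * R => g (fst p) (snd p)) (a, b) ->
                    continuity_2d_pt (fun x y => Re (g x y)) a b).
  { intros g' a b H. apply continuity_2d_pt_filterlim.
    apply (filterlim_comp _ _ _ (fun p : R * R => g' (fst p) (snd p)) Re _ _ _ H).
    intros P [eps HP]. exists eps. intros c [Hc _]. now apply HP. }
  revert g; induction n; intros g Hg a b Hab.
  - split; [apply Hcont, Hg, Hab | exact I].
  - destruct Hg as [H0 [H1 H2]]. destruct (H0 a b Hab) as [Hc [Ha [_ [Hb _]]]].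
    repeat split; [apply Hcont, Hc | exact Ha | exact Hb | apply (IHn _ H1 a b Hab)
                  | apply (IHn _ H2 a b Hab)].
Qed.

Definition square (d x y : R) : Prop := Rabs x < d /\ Rabs y < d.

Lemma square_open d : open_2d (square d).
Proof.
  intros x y [Hx Hy].
  assert (Hp : 0 < d - Rmax (Rabs x) (Rabs y)) by (apply Rmax_case; lra).
  exists (mkposreal _ Hp). simpl. intros u v Hu Hv.
  pose proof (Rmax_l (Rabs x) (Rabs y)). pose proof (Rmax_r (Rabs x) (Rabs y)).
  pose proof (Rabs_triang_inv u x). pose proof (Rabs_triang_inv v y).
  split; lra.
Qed.

Lemma square_inball r x y : 0 < r -> square (r / 2) x y -> inball 0 0 r x y.
Proof.
  intros Hr [Hx Hy]. unfold inball.
  apply Rabs_def2 in Hx. apply Rabs_def2 in Hy. nra.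
Qed.

Lemma square_center d : 0 < d -> square d 0 0.
Proof. intros Hd; split; rewrite Rabs_R0; exact Hd. Qed.

Lemma Re_dz_RtoC (u : R -> R -> R) x y :
  Re (dz (fun a b => RtoC (u a b)) x y) = / 2 * Derive (fun t => u t y) x.
Proof. rewrite Re_dz. simpl. rewrite Derive_const. field. Qed.

Lemma Im_dz_RtoC (u : R -> R -> R) x y :
  Im (dz (fun a b => RtoC (u a b)) x y) = - / 2 * Derive (fun t => u x t) y.
Proof. rewrite Im_dz. simpl. rewrite Derive_const. field. Qed.

(* [u_{z zbar} = (u_xx + u_yy) / 4] is real: the mixed partials cancel by Schwarz. *)
Lemma Im_dzb_dz_RtoC (u : R -> R -> R) U x y : open_2d U -> diff_on 2 u U -> U x y ->
  Im (dzb (dz (fun a b => RtoC (u a b))) x y) = 0.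
Proof.
  intros HU Hu Hxy. rewrite Im_dzb.
  rewrite (Derive_ext _ (fun t => - / 2 * Derive (fun s => u t s) y)) by (intros; apply Im_dz_RtoC).
  rewrite (Derive_ext (fun s => Re (dz (fun a b => RtoC (u a b)) x s))
                      (fun s => / 2 * Derive (fun t => u t s) x)) by (intros; apply Re_dz_RtoC).
  rewrite !Derive_scal, (mixed_partials_sym U x y HU Hxy u Hu).
  change (Derive (fun t => Derive (fun s => u t s) y) x) with (partial_derive 1 1 u x y). ring.
Qed.

Lemma mhz_eq_neg_dz_lnh h z :
  ex_derive (fun t => h t (Im z)) (Re z) -> ex_derive (fun t => h (Re z) t) (Im z) ->
  0 < h (Re z) (Im z) -> mhz h z = (- dz (lnh h) (Re z) (Im z))%C.
Proof.
  intros Hx Hy Hpos. unfold mhz, dz, pd1, pd2, lnh, cplx. simpl. rewrite !Derive_const.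
  replace (Derive (fun t => ln (h t (Im z))) (Re z))
    with (Derive (fun t => h t (Im z)) (Re z) * / h (Re z) (Im z))
    by (symmetry; apply is_derive_unique, (is_derive_ln_comp (fun t => h t (Im z))); assumption).
  replace (Derive (fun t => ln (h (Re z) t)) (Im z))
    with (Derive (fun t => h (Re z) t) (Im z) * / h (Re z) (Im z))
    by (symmetry; apply is_derive_unique, (is_derive_ln_comp (fun t => h (Re z) t)); assumption).
  apply injective_projections; simpl; field; lra.
Qed.

Lemma nu_vanish_algebra c0 c1 c4 c5 :
  (c0 * c1 + c5)%C = 0%C -> Im c1 = 0 -> (2 * c4)%C = Cconj c5 ->
  (c5 - 2 * (- c0 / 2) * c1)%C = 0%C /\ (c4 - c1 * Cconj (- c0 / 2))%C = 0%C.
Proof.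
  destruct c0 as [a0 b0], c1 as [a1 b1], c4 as [a4 b4], c5 as [a5 b5].
  intros H1 H2 H3. unfold Im in H2. simpl in H2. subst b1.
  apply (f_equal fst) in H1 as H1r. apply (f_equal snd) in H1 as H1i.
  apply (f_equal fst) in H3 as H3r. apply (f_equal snd) in H3 as H3i.
  simpl in *.
  split; apply injective_projections; simpl; field_simplify; nra.
Qed.

Lemma square_of_Cmod d z : Cmod z < d -> square d (Re z) (Im z).
Proof.
  intros Hz. split; eapply Rle_lt_trans; try exact Hz; [apply re_le_Cmod |].
  eapply Rle_trans; [apply Rmax_r | apply Rmax_Cmod].
Qed.

Lemma diff_on_dz_RtoC U u n : open_2d U -> diff_on (S n) u U ->
  diff_on n (fun x y => Re (dz (fun a b => RtoC (u a b)) x y)) U /\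
  diff_on n (fun x y => Im (dz (fun a b => RtoC (u a b)) x y)) U.
Proof.
  intros HU Hu. split.
  - apply (diff_on_ext U _ (fun x y => / 2 * Derive (fun t => u t y) x));
      [intros; symmetry; apply Re_dz_RtoC|].
    apply diff_on_mult; [exact HU | exact (diff_on_const U HU _ _) | now apply diff_on_deriv1].
  - apply (diff_on_ext U _ (fun x y => - / 2 * Derive (fun t => u x t) y));
      [intros; symmetry; apply Im_dz_RtoC|].
    apply diff_on_mult; [exact HU | exact (diff_on_const U HU _ _) | now apply diff_on_deriv2].
Qed.

Lemma dz_lnh_expansion h d c0 c1 c2 c3 c4 c5 : 0 < d ->
  (forall x y, square d x y ->
     ex_derive (fun t => h t y) x /\ ex_derive (fun t => h x t) y /\ 0 < h x y) ->
  bigO 3 (fun z => mhz h z - quad_form c0 c1 c2 c3 c4 c5 z)%C ->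
  bigO 3 (fun z => dz (lnh h) (Re z) (Im z)
                   - quad_form (- c0) (- c1) (- c2) (- c3) (- c4) (- c5) z)%C.
Proof.
  intros Hd Hh Hexp. eapply bigO_ext_near; [| exact (bigO_opp _ _ Hexp)].
  exists d; split; [exact Hd|]. intros z Hz.
  destruct (Hh _ _ (square_of_Cmod d z Hz)) as [Hx [Hy Hpos]].
  rewrite (mhz_eq_neg_dz_lnh h z Hx Hy Hpos). unfold quad_form. ring.
Qed.

Lemma nu2_nu3_vanish h r c0 c1 c2 c3 c4 c5 :
  0 < r -> (forall x y, inball 0 0 r x y -> 0 < h x y) -> smooth_on (cplx h) (inball 0 0 r) ->
  intrinsic_vanishing h ->
  bigO 3 (fun z => mhz h z - quad_form c0 c1 c2 c3 c4 c5 z)%C ->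
  (c5 - 2 * (- c0 / 2) * c1)%C = 0%C /\ (c4 - c1 * Cconj (- c0 / 2))%C = 0%C.
Proof.
  intros Hr Hpos Hs HI Hexp.
  set (U := square (r / 2)).
  assert (HU : open_2d U) by apply square_open.
  assert (HU0 : U 0 0) by (apply square_center; lra).
  assert (HposU : forall x y, U x y -> 0 < h x y) by (intros; apply Hpos, square_inball; auto).
  assert (Hh : forall n, diff_on n h U).
  { intros n x y Hxy. exact (Ck_Re_diff_on n _ _ (Hs n) x y (square_inball r x y Hr Hxy)). }
  assert (Hu : forall n, diff_on n (fun x y => ln (h x y)) U) by (intros; apply diff_on_ln; auto).
  set (G := dz (lnh h)).
  destruct (diff_on_dz_RtoC U _ 3 HU (Hu 4%nat)) as [HGr HGi].
  assert (HexpG : bigO 3 (fun z => G (Re z) (Im z)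
                            - quad_form (- c0) (- c1) (- c2) (- c3) (- c4) (- c5) z)%C).
  { apply (dz_lnh_expansion h (r / 2)); [lra | | exact Hexp].
    intros x y Hxy. repeat split; [| | exact (HposU x y Hxy)].
    - exact (diff_on_ex_derive1 U 0 h x y (Hh 1%nat) Hxy).
    - exact (diff_on_ex_derive2 U 0 h x y (Hh 1%nat) Hxy). }
  destruct (wirtinger_coeffs G U _ _ _ _ _ _ HU HU0 HGr HGi HexpG) as [E0 [E1 [E5 E4]]].
  assert (HAreal : forall x y, U x y -> Im (dzb G x y) = 0).
  { intros x y Hxy. apply (Im_dzb_dz_RtoC _ U); [exact HU | apply Hu | exact Hxy]. }
  assert (HAconj : dzb (dzb G) 0 0 = Cconj (dz (dzb G) 0 0)).
  { apply dzb_real, (open_2d_locally U HU); [exact HU0 | exact HAreal]. }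
  apply nu_vanish_algebra.
  - unfold intrinsic_vanishing in HI. fold G in HI. rewrite E0, E1, E5 in HI.
    rewrite <- HI. ring.
  - specialize (HAreal 0 0 HU0). rewrite E1 in HAreal. unfold Im in *; simpl in HAreal; lra.
  - rewrite E4, E5 in HAconj.
    transitivity (- (2 * - c4))%C; [ring|]. rewrite HAconj.
    destruct c5; apply injective_projections; simpl; ring.
Qed.

Theorem corollary5p1
  (h : R -> R -> R) (r : R) (c0 c1 c2 c3 c4 c5 g2 g3 : CC) :
  0 < r ->
  (forall x y, inball 0 0 r x y -> 0 < h x y) ->
  smooth_on (cplx h) (inball 0 0 r) ->
  intrinsic_vanishing h ->
  (exists K delta, 0 < delta /\ forall z : CC, Cmod z < delta ->
     Cmod (mhz h z - (c0 + c1 * Cconj z + c2 * z + c3 * (z * z)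
                      + c4 * (Cconj z * Cconj z) + c5 * (z * Cconj z)))%C
       <= K * Cmod z ^ 3) ->
  let g1 := (- c0 / 2)%C in
  (c2 + 2 * g1 * c0 + 6 * g2)%C = 0%C ->
  (12 * g3 + c3 + 2 * g1 * c2 + 3 * g2 * c0)%C = 0%C ->
  let nu2 := (c5 - 2 * g1 * c1)%C in
  let nu3 := (c4 - c1 * Cconj g1)%C in
  let wmap := fun z : CC => (z + g1 * (z * z) + g2 * (z * z * z) + g3 * (z * z * z * z))%C in
  nu2 = 0%C /\ nu3 = 0%C /\
  (exists (delta K : R) (E : CC -> CC),
     0 < delta /\
     (forall z : CC, Cmod z < delta -> Cmod (E z) <= K * Cmod (wmap z) ^ 3) /\
     forall (Z : fun2) (t0 x0 rho : R),
       0 < rho ->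
       smooth_on Z (inball t0 x0 rho) ->
       (forall t x, inball t0 x0 rho t x -> Cmod (Z t x) < r /\ SMF_at h Z t x) ->
       Cmod (Z t0 x0) < delta ->
       let W := fun t x => wmap (Z t x) in
       (Ci * pd1 W t0 x0 + pd2 (pd2 W) t0 x0)%C =
       (c1 * Cconj (W t0 x0) * (pd2 W t0 x0 * pd2 W t0 x0)
        + E (Z t0 x0) * (pd2 W t0 x0 * pd2 W t0 x0))%C).
Proof.
  intros Hr Hpos Hs HI Hexp g1 Hg2 Hg3 nu2 nu3 w.
  destruct (nu2_nu3_vanish h r c0 c1 c2 c3 c4 c5 Hr Hpos Hs HI Hexp) as [Hnu2 Hnu3].
  split; [exact Hnu2|]. split; [exact Hnu3|].
  destruct (nf_error_bound c0 c1 c2 c3 c4 c5 g1 g2 g3 eq_refl Hg2 Hg3 Hnu2 Hnu3 (mhz h) Hexp)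
    as [d [K [Hd Hbound]]].
  exists d, K, (nf_error c1 g1 g2 g3 (mhz h)). split; [exact Hd|]. split.
  - intros z Hz. exact (proj2 (Hbound z Hz)).
  - intros Z t0 x0 rho Hrho HZs HZ Hz0.
    assert (Hin : inball t0 x0 rho t0 x0) by (unfold inball; nra).
    exact (smf_normal_form (mhz h) c1 g1 g2 g3 Z t0 x0 rho Hrho HZs
             (proj2 (HZ t0 x0 Hin)) (proj1 (Hbound _ Hz0))).
Qed.
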